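(* Let $q$ be a 2way-determined two-atom query over $R$ satisfying the standing assumption below, and let $D$ be a database. If the bipartite graph $H(D,q)$ has no matching saturating $V_1$ (i.e. $D\models\neg\mathrm{Matching}$), then $q$ is certain for $D$.
   Context: $R$ has arity at least $1$ with first $l$ positions forming the key. Facts $R(\bar a)$, atoms $R(\bar x)$; $\mathrm{vars}(A)$ variables of $A$; $\overline{\mathrm{key}}(t)$ tuple of first $l$ entries, $\mathrm{key}(t)$ their set; $a\sim b$ iff equal key tuples. Database: finite set of facts; block: maximal set of pairwise key-equal facts; repair: $\subseteq$-maximal subset with no two distinct key-equal facts. $D\models q(ab)$ means $a=\mu(A)$, $b=\mu(B)\in D$ for some variable-to-element mapping $\mu$ ($a=b$ allowed); $q\{ab\}$ means $q(ab)$ or $q(ba)$; $q$ is certain for $D$ if every repair satisfies $q$. $q=AB$ is 2way-determined if $\mathrm{key}(A)\not\subseteq\mathrm{key}(B)$, $\mathrm{key}(B)\not\subseteq\mathrm{key}(A)$, $\mathrm{key}(A)\subseteq\mathrm{vars}(B)$, $\mathrm{key}(B)\subseteq\mathrm{vars}(A)$. Standing assumption: $\overline{\mathrm{key}}(A)\ne\overline{\mathrm{key}}(B)$ and $q$ not equivalent over consistent databases to a single-atom query. Matching algorithm: the solution graph $G(D,q)$ is the undirected graph on the facts of $D$ with an edge $\{a,b\}$ iff $D\models q\{ab\}$. A connected component $C$ of $G(D,q)$ is a quasi-clique if for all $a,b\in C$ with $a\not\sim b$, $\{a,b\}$ is an edge. For a fact $a$, $\mathrm{clique}(a)$ is the component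 of $a$ if it is a quasi-clique, and $\{a\}$ otherwise. $H(D,q)$ is the bipartite graph with parts $V_1$ = the set of blocks of $D$ and $V_2=\{\mathrm{clique}(a): a\in D\}$, with an edge $(v_1,v_2)$ iff block $v_1$ contains a fact $a\in v_2$ with $D\not\models q(aa)$. $D\models\mathrm{Matching}$ iff $H(D,q)$ has a matching saturating $V_1$. *)

From mathcomp Require Import all_boot.
From mathcomp Require Import boolp.

Set Implicit Arguments.
Unset Strict Implicit.
Unset Printing Implicit Defensive.

Section CQA.

(* k = arity of R, l = key length (first l positions). *)
Variables (k l : nat).
Variable E : finType.

Definition fact := k.-tuple E.
Definition atom := k.-tuple nat.

Definition keyeq (a b : fact) : bool := take l a == take l b.

Definition consistent (r : {set fact}) : Prop :=
  forall a b, a \in r -> b \in r -> keyeq a b -> a = b.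

Definition repair (D r : {set fact}) : Prop :=
  r \subset D /\ consistent r /\
  (forall r' : {set fact}, r \subset r' -> r' \subset D -> consistent r' -> r' = r).

Definition qab (A B : atom) (D : {set fact}) (a b : fact) : Prop :=
  a \in D /\ b \in D /\
  exists mu : nat -> E, (a : seq E) = map mu A /\ (b : seq E) = map mu B.

Definition satq (A B : atom) (D : {set fact}) : Prop :=
  exists a b, qab A B D a b.

Definition sat_atom (C : atom) (D : {set fact}) : Prop :=
  exists a, a \in D /\ exists mu : nat -> E, (a : seq E) = map mu C.

Definition certain (A B : atom) (D : {set fact}) : Prop :=
  forall r, repair D r -> satq A B r.

Definition sedge (A B : atom) (D : {set fact}) (a b : fact) : bool :=
  `[< qab A B D a b \/ qab A B D b a >].

Definition component (A B : atom) (D : {set fact}) (a : fact) : {set fact} :=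
  [set b in D | connect (sedge A B D) a b].

Definition quasi_clique (A B : atom) (D : {set fact}) (C : {set fact}) : bool :=
  [forall a in C, forall b in C, ~~ keyeq a b ==> sedge A B D a b].

Definition clique (A B : atom) (D : {set fact}) (a : fact) : {set fact} :=
  if quasi_clique A B D (component A B D a) then component A B D a else [set a].

Definition blocks (D : {set fact}) : {set {set fact}} :=
  [set [set b in D | keyeq a b] | a in D].

Definition cliques (A B : atom) (D : {set fact}) : {set {set fact}} :=
  [set clique A B D a | a in D].

Definition hedge (A B : atom) (D : {set fact}) (v1 v2 : {set fact}) : bool :=
  [exists a in v1, (a \in v2) && ~~ `[< qab A B D a a >]].

Definition Matching (A B : atom) (D : {set fact}) : Prop :=
  exists M : {set {set fact} * {set fact}},
    (forall e, e \in M ->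
       [/\ e.1 \in blocks D, e.2 \in cliques A B D & hedge A B D e.1 e.2]) /\
    (forall e e', e \in M -> e' \in M -> e != e' -> e.1 != e'.1 /\ e.2 != e'.2) /\
    (forall v1, v1 \in blocks D -> exists v2, (v1, v2) \in M).

End CQA.

Definition key_vars (l k : nat) (A : k.-tuple nat) : seq nat := take l A.

Definition two_way_determined (k l : nat) (A B : k.-tuple nat) : Prop :=
  ~ {subset key_vars l A <= key_vars l B} /\
  ~ {subset key_vars l B <= key_vars l A} /\
  {subset key_vars l A <= (B : seq nat)} /\
  {subset key_vars l B <= (A : seq nat)}.

Definition standing_assumption (k l : nat) (A B : k.-tuple nat) : Prop :=
  key_vars l A <> key_vars l B /\
  ~ (exists C : k.-tuple nat,
       forall (E : finType) (D : {set k.-tuple E}),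
         consistent l D -> (satq A B D <-> sat_atom C D)).

(* If some repair r falsifies q, then no two facts of r are joined by an edge
   of the solution graph and no fact of r satisfies q(aa).  Hence the cliques
   of distinct facts of r are distinct, and sending each block to the clique of
   the unique fact of r it contains is a matching of H(D,q) saturating the
   blocks. *)
From mathcomp Require Import all_boot.
From mathcomp Require Import boolp.

Set Implicit Arguments.
Unset Strict Implicit.
Unset Printing Implicit Defensive.

Section Blocks.

Variables (k l : nat) (E : finType).
Implicit Types (a b c x y : fact k E) (D r : {set fact k E}) (v w : {set fact k E}).

Lemma keyeq_refl a : keyeq l a a.
Proof. exact: eqxx. Qed.

Lemma keyeq_sym a b : keyeq l a b = keyeq l b a.
Proof. exact: eq_sym. Qed.

Lemma keyeq_trans b a c : keyeq l a b -> keyeq l b c -> keyeq l a c.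
Proof. by rewrite /keyeq => /eqP -> /eqP ->. Qed.

Lemma blocks_keyeq D v x y :
  v \in blocks l D -> x \in v -> y \in v -> keyeq l x y.
Proof.
case/imsetP=> a _ ->; rewrite !inE => /andP[_ ax] /andP[_ ay].
by apply: (keyeq_trans (b := a)) ay; rewrite keyeq_sym.
Qed.

Lemma blocks_eq D v w x :
  v \in blocks l D -> w \in blocks l D -> x \in v -> x \in w -> v = w.
Proof.
case/imsetP=> a _ -> /imsetP[b _ ->]; rewrite !inE => /andP[_ ax] /andP[_ bx].
have ab : keyeq l a b by apply: (keyeq_trans ax); rewrite keyeq_sym.
apply/setP=> z; rewrite !inE; case: (z \in D) => //=.
apply/idP/idP => [az | bz].
  by apply: (keyeq_trans (b := a)) az; rewrite keyeq_sym.
exact: keyeq_trans ab bz.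
Qed.

Lemma consistent_blocks_uniq D r v x y : consistent l r ->
  v \in blocks l D -> x \in v :&: r -> y \in v :&: r -> x = y.
Proof.
move=> cons_r vD; rewrite !inE => /andP[xv xr] /andP[yv yr].
exact: cons_r (blocks_keyeq vD xv yv).
Qed.

Lemma repair_sub D r x : repair l D r -> x \in r -> x \in D.
Proof. by case=> /subsetP rD _ /rD. Qed.

Lemma repair_consistent D r : repair l D r -> consistent l r.
Proof. by case=> _ []. Qed.

(* By maximality: otherwise a representative of the block could be added to r. *)
Lemma repair_meets_blocks D r v :
  repair l D r -> v \in blocks l D -> exists x, x \in v :&: r.
Proof.
move=> rep /imsetP[a aD ->].
case: (pickP (mem ([set b in D | keyeq l a b] :&: r))) => [x xv | none]; first by exists x.
have a_out b : b \in r -> keyeq l a b = false.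
  by move=> br; move: (none b); rewrite !inE br (repair_sub rep br) andbT.
have [rD [cons_r max_r]] := rep.
have cons_ar : consistent l (a |: r).
  move=> u w; rewrite !inE => /orP[/eqP-> | ur] /orP[/eqP-> | wr] //.
  - by rewrite a_out.
  - by rewrite keyeq_sym a_out.
  - exact: cons_r.
have ar : a |: r = r by apply: max_r; rewrite ?subsetUr // subUset sub1set aD rD.
by move: (none a); rewrite !inE aD keyeq_refl -ar setU11.
Qed.

End Blocks.

Section FalsifyingRepair.

Variables (k l : nat) (E : finType) (A B : atom k) (D r : {set fact k E}).
Hypotheses (rep : repair l D r) (unsat : ~ satq A B r).

Lemma repair_no_solution x y : x \in r -> y \in r -> ~ qab A B D x y.
Proof. by move=> xr yr [_ [_ mu]]; apply: unsat; exists x, y. Qed.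

Lemma repair_no_edge x y : x \in r -> y \in r -> ~~ sedge A B D x y.
Proof.
by move=> xr yr; apply/asboolP => -[]; apply: repair_no_solution.
Qed.

Lemma mem_clique x : x \in D -> x \in clique l A B D x.
Proof.
move=> xD; rewrite /clique; case: ifP => _; last exact: set11.
by rewrite inE xD connect0.
Qed.

Lemma repair_clique_inj x y : x \in r -> y \in r ->
  clique l A B D x = clique l A B D y -> x = y.
Proof.
move=> xr yr eq_xy.
have := mem_clique (repair_sub rep yr); rewrite -eq_xy /clique.
case: ifP => [/forall_inP qc yC | _]; last by move/set1P.
have xC : x \in component A B D x by rewrite inE (repair_sub rep xr) connect0.
move/forall_inP/(_ y yC): (qc x xC).
case: (boolP (keyeq l x y)) => [xy _ | _ /= xy]; first exact: repair_consistent rep _ _ xr yr xy.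
by move: (repair_no_edge xr yr); rewrite xy.
Qed.

Definition repair_matching : {set {set fact k E} * {set fact k E}} :=
  [set (v, clique l A B D x) | v in blocks l D, x in v :&: r].

Lemma repair_matching_edges e : e \in repair_matching ->
  [/\ e.1 \in blocks l D, e.2 \in cliques l A B D & hedge A B D e.1 e.2].
Proof.
case/imset2P=> v x vD; rewrite inE => /andP[xv xr] -> /=.
have xD := repair_sub rep xr.
split=> //; first exact: imset_f.
apply/exists_inP; exists x => //; rewrite mem_clique //=.
by apply/asboolP => /(repair_no_solution xr xr).
Qed.

Lemma repair_matching_disjoint e e' :
  e \in repair_matching -> e' \in repair_matching -> e != e' ->
  e.1 != e'.1 /\ e.2 != e'.2.
Proof.
case/imset2P=> v x vD xvr -> /imset2P[v' x' v'D x'vr ->] /=.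
move: (xvr) (x'vr); rewrite !inE => /andP[xv xr] /andP[x'v' x'r].
move=> ne; split; apply: contraNneq ne.
  move=> eq_v; rewrite -eq_v in x'vr.
  by rewrite eq_v (consistent_blocks_uniq (repair_consistent rep) vD xvr x'vr).
move=> eq_c; have eq_x := repair_clique_inj xr x'r eq_c.
by rewrite eq_c (blocks_eq vD v'D xv) // eq_x.
Qed.

Lemma repair_matching_saturates v :
  v \in blocks l D -> exists w, (v, w) \in repair_matching.
Proof.
move=> vD; have [x xvr] := repair_meets_blocks rep vD.
by exists (clique l A B D x); apply/imset2P; exists v x.
Qed.

Lemma falsifying_repair_Matching : Matching l A B D.
Proof.
exists repair_matching; split; last split.
- exact: repair_matching_edges.
- exact: repair_matching_disjoint.
- exact: repair_matching_saturates.
Qed.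

End FalsifyingRepair.

Theorem proposition10p2 (k l : nat) (E : finType) (A B : k.-tuple nat)
    (D : {set k.-tuple E}) :
  0 < k -> l <= k ->
  two_way_determined l A B ->
  standing_assumption l A B ->
  ~ Matching l A B D ->
  certain l A B D.
Proof.
move=> _ _ _ _ noM r rep; apply: contrapT => unsat.
exact/noM/(falsifying_repair_Matching rep unsat).
Qed.
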